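(* Let $\Omega \subset \mathbb{R}^d$ with $d \ge 3$ be a bounded Lipschitz domain. Define the conformal Killing space $$\mathbf{CK}\coloneqq\{\boldsymbol{u}:\ \boldsymbol{u}(\mathbf{x}) = \mathbf{a} + \lambda\mathbf{x} + A\mathbf{x} + 2(\mathbf{b}\cdot\mathbf{x})\mathbf{x} - \|\mathbf{x}\|^2\mathbf{b}\ \text{ for } \mathbf{x}\in\Omega\},$$ where $\mathbf{a}, \mathbf{b} \in \mathbb{R}^d$, $\lambda \in \mathbb{R}$, and $A \in \mathbb{R}^{d\times d}$ is skew-symmetric. If $\boldsymbol{\varphi}\in \mathbf{CK}$ satisfies $\boldsymbol{\varphi}|_{\partial\Omega}=\mathbf{0}$, then $\boldsymbol{\varphi}=\mathbf{0}$ in $\Omega$.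
   Context: $\|\mathbf{x}\|$ denotes the Euclidean norm of $\mathbf{x}\in\mathbb{R}^d$. *)

From HB Require Import structures.
From mathcomp Require Import all_boot all_order all_algebra.
From mathcomp Require Import all_classical all_reals all_analysis.
Set Implicit Arguments. Unset Strict Implicit. Unset Printing Implicit Defensive.
Import Order.TTheory GRing.Theory Num.Theory.
Import numFieldNormedType.Exports.
Local Open Scope classical_set_scope.
Local Open Scope ring_scope.

Section Defs.
Variable R : realType.

Definition dotv (d : nat) (x y : 'rV[R]_d) : R := \sum_(i < d) x ord0 i * y ord0 i.
Definition sqnorm (d : nat) (x : 'rV[R]_d) : R := dotv x x.
Definition enorm (d : nat) (x : 'rV[R]_d) : R := Num.sqrt (sqnorm x).

Definition bdry (d : nat) (O : set 'rV[R]_d) : set 'rV[R]_d :=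
  closure O `\` interior O.

Definition is_last (d : nat) (j : 'I_d) : bool := (j : nat) == d.-1.

(* Bounded Lipschitz domain (Grisvard's definition): nonempty, open, connected,
   bounded, and near each boundary point p, after an orthogonal change of
   coordinates y = (x - p) Q, Omega coincides inside the box
   { |y_j| < a_j } with the region below the graph y_d < g(y') of a Lipschitz
   function g of the first d-1 coordinates y', with |g(y')| <= a_d / 2. *)
Definition bounded_lipschitz_domain (d : nat) (O : set 'rV[R]_d) : Prop :=
  [/\ O !=set0, open O, connected O, bounded_set O &
   forall p, bdry O p ->
   exists (Q : 'M[R]_d) (a : 'rV[R]_d) (g : 'rV[R]_d -> R) (L : R),
     [/\ Q *m Q^T = 1%:M /\ (forall j, 0 < a ord0 j),
         (forall y z : 'rV[R]_d,
            (forall j, ~~ is_last j -> y ord0 j = z ord0 j) -> g y = g z),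
         (forall y z : 'rV[R]_d, `|g y - g z| <= L * enorm (y - z)),
         (forall y : 'rV[R]_d,
            (forall j, ~~ is_last j -> `|y ord0 j| < a ord0 j) ->
            forall j, is_last j -> `|g y| <= a ord0 j / 2) &
         (forall x : 'rV[R]_d,
            let y := (x - p) *m Q in
            (forall j, `|y ord0 j| < a ord0 j) ->
            (O x <-> forall j, is_last j -> y ord0 j < g y))]].

(* The conformal Killing field with parameters a, b, lambda, A :
   u(x) = a + lambda x + A x + 2 (b.x) x - ||x||^2 b
   (row-vector convention: A x is written x *m A^T). *)
Definition ck_field (d : nat) (a b : 'rV[R]_d) (lam : R) (A : 'M[R]_d)
  (x : 'rV[R]_d) : 'rV[R]_d :=
  a + lam *: x + x *m A^T + (2 * dotv b x) *: x - sqnorm x *: b.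

(* membership in the conformal Killing space CK (u given by the polynomial
   formula, which is also its continuous extension to the closure) *)
Definition in_CK (d : nat) (u : 'rV[R]_d -> 'rV[R]_d) : Prop :=
  exists (a b : 'rV[R]_d) (lam : R) (A : 'M[R]_d),
    A^T = - A /\ forall x, u x = ck_field a b lam A x.

End Defs.

(* Along a line x + t v, the i-th coordinate of a conformal Killing field is a
   polynomial of degree at most 2 in t, with leading coefficient
   2 (b.v) v_i - |v|^2 b_i.  This is a quadratic form in v which is trace-free
   on the plane of two coordinate axes e_i, e_j (here d >= 2 is used), so it
   has a nonzero isotropic vector v.  In that direction the coordinate is
   affine in t.  The line leaves the bounded open set Omega on both sides of x
   at boundary points, where the field vanishes; an affine function vanishing
   at some t1 > 0 and at some -t2 < 0 vanishes at 0. *)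

From HB Require Import structures.
From mathcomp Require Import all_boot all_order all_algebra.
From mathcomp Require Import all_classical all_reals all_analysis.
From mathcomp Require Import lra ring.
Import Order.TTheory GRing.Theory Num.Theory.
Import numFieldNormedType.Exports.
Local Open Scope classical_set_scope.
Local Open Scope ring_scope.

Lemma bounded_set_normP {R : realType} {V : normedModType R} (O : set V) :
  bounded_set O -> exists M : R, forall y, O y -> `|y| <= M.
Proof. by move=> /(@filter_ex R _ _ _)[M HM]; exists M => y /HM. Qed.

Lemma closure_preimage_continuous {T U : topologicalType} (f : T -> U) (A : set U) :
  continuous f -> closure (f @^-1` A) `<=` f @^-1` closure A.
Proof.
move=> cf; have /closure_id -> : closed (f @^-1` closure A).
  by apply: preimage_closed => [x _|]; [exact: cf | exact: closed_closure].
by apply: closureS; apply: preimage_subset; exact: subset_closure.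
Qed.

Lemma open_bounded_ray_bdry {R : realType} {d : nat} {O : set 'rV[R]_d}
    {x v : 'rV[R]_d} :
  open O -> bounded_set O -> O x -> v != 0 ->
  exists2 t, 0 < t & bdry O (x + t *: v).
Proof.
move=> oO /bounded_set_normP[M HM] Ox v0.
pose f t := x + t *: v.
have cf : continuous f.
  by move=> t; apply: cvgD; [exact: cvg_cst | exact: scalel_continuous].
pose S := f @^-1` O.
have S0 : S 0 by rewrite /S /f /= scale0r addr0.
have oS : open S by exact: open_comp.
have ubS : has_ubound S.
  exists ((M + `|x|) / `|v|) => t St; have nv : 0 < `|v| by rewrite normr_gt0.
  rewrite ler_pdivlMr //; have := HM _ St; rewrite /f.
  have := ler_normB (x + t *: v) x; rewrite addrAC subrr add0r normrZ.
  have := ler_norm t; nra.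
have notS_sup : ~ S (sup S).
  have := @right_bounded_interior _ S ubS (sup S).
  by rewrite (interior_id S).1 //= ltxx => notlt /notlt.
have supS : has_sup S by split => //; exists 0.
have sup_ge0 : 0 <= sup S by exact: sup_upper_bound supS _ S0.
exists (sup S).
  by rewrite lt_neqAle sup_ge0 andbT; apply/eqP => sup0; rewrite -sup0 in notS_sup.
split; first by apply: closure_preimage_continuous cf _ (closure_sup supS.1 ubS).
by move: oO => /interior_id ->.
Qed.

Lemma line_affine_bdry_eq0 {R : realType} {d : nat} {O : set 'rV[R]_d}
    {x v : 'rV[R]_d} (f : 'rV[R]_d -> R) (beta : R) :
  open O -> bounded_set O -> O x -> v != 0 ->
  (forall y, bdry O y -> f y = 0) ->
  (forall t, f (x + t *: v) = beta * t + f x) -> f x = 0.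
Proof.
move=> oO bO Ox v0 f0 fline.
have [t1 t1_gt0 /f0 ft1] := open_bounded_ray_bdry oO bO Ox v0.
have [|t2 t2_gt0] := open_bounded_ray_bdry oO bO Ox (v := - v).
  by rewrite oppr_eq0.
rewrite scalerN -scaleNr => /f0 ft2.
rewrite fline in ft1; rewrite fline in ft2.
have : f x * (t1 + t2) = t2 * (beta * t1 + f x) + t1 * (beta * - t2 + f x).
  by ring.
rewrite ft1 ft2 !mulr0 addr0 => /eqP; rewrite mulf_eq0 => /orP[/eqP //|].
by rewrite gt_eqF // addr_gt0.
Qed.

Lemma trace_free_form_isotropic {R : rcfType} (p q : R) :
  exists2 yz : R * R, yz != (0, 0) &
    p * yz.1 ^+ 2 + 2 * q * yz.1 * yz.2 - p * yz.2 ^+ 2 = 0.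
Proof.
have [->|p0] := eqVneq p 0.
  by exists (1, 0); rewrite ?xpair_eqE ?oner_eq0 //=; ring.
pose r := Num.sqrt (p ^+ 2 + q ^+ 2).
have r2 : r ^+ 2 = p ^+ 2 + q ^+ 2 by rewrite sqr_sqrtr // addr_ge0 ?sqr_ge0.
exists (r - q, p) => /=; first by rewrite xpair_eqE (negbTE p0) andbF.
have -> : p * (r - q) ^+ 2 + 2 * q * (r - q) * p - p * p ^+ 2
          = p * (r ^+ 2 - (p ^+ 2 + q ^+ 2)) by ring.
by rewrite r2 subrr mulr0.
Qed.

Section ConformalKilling.
Context {R : realType} {d : nat}.
Implicit Types (w x v b : 'rV[R]_d) (t : R).

Lemma dotvDr w x v t : dotv w (x + t *: v) = dotv w x + t * dotv w v.
Proof.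
rewrite /dotv mulr_sumr -big_split /=; apply: eq_bigr => k _.
by rewrite !mxE mulrDr mulrCA.
Qed.

Lemma sqnormD x v t :
  sqnorm (x + t *: v) = sqnorm x + 2 * t * dotv x v + t ^+ 2 * sqnorm v.
Proof.
rewrite /sqnorm /dotv !mulr_sumr -!big_split /=; apply: eq_bigr => k _.
rewrite !mxE; ring.
Qed.

Lemma ck_field_line a b lam (A : 'M[R]_d) x v (i : 'I_d) :
  exists beta, forall t,
    ck_field a b lam A (x + t *: v) ord0 i =
    (2 * dotv b v * v ord0 i - sqnorm v * b ord0 i) * t ^+ 2 + beta * t
    + ck_field a b lam A x ord0 i.
Proof.
exists (lam * v ord0 i + (v *m A^T) ord0 i
        + 2 * (dotv b x * v ord0 i + dotv b v * x ord0 i)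
        - 2 * dotv x v * b ord0 i) => t.
rewrite /ck_field dotvDr sqnormD mulmxDl -scalemxAl !mxE; ring.
Qed.

Definition row2 (i j : 'I_d) (y z : R) : 'rV[R]_d :=
  \row_k (y * (k == i)%:R + z * (k == j)%:R).

Lemma dotv_row2 w (i j : 'I_d) y z : i != j ->
  dotv w (row2 i j y z) = y * w ord0 i + z * w ord0 j.
Proof.
move=> ij; rewrite /dotv (bigD1 i) //= (bigD1 j) 1?eq_sym //= big1 ?addr0.
  by rewrite !mxE !eqxx (negbTE ij) eq_sym (negbTE ij) /=; ring.
by move=> k /andP[ki kj]; rewrite !mxE (negbTE ki) (negbTE kj) /=; ring.
Qed.

(* On the plane spanned by e_i and e_j the coefficient is the trace-free form
   b_i y^2 + 2 b_j y z - b_i z^2. *)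
Lemma ck_quad_coef_isotropic b {i j : 'I_d} : i != j ->
  exists2 v, v != 0 & 2 * dotv b v * v ord0 i - sqnorm v * b ord0 i = 0.
Proof.
move=> ij; have [[y z] yz0 iso] := trace_free_form_isotropic (b ord0 i) (b ord0 j).
have vi : row2 i j y z ord0 i = y by rewrite mxE eqxx (negbTE ij) /=; ring.
have vj : row2 i j y z ord0 j = z by rewrite mxE eqxx eq_sym (negbTE ij) /=; ring.
exists (row2 i j y z).
  apply: contraNneq yz0 => v0.
  by rewrite v0 !mxE in vi vj; rewrite -vi -vj.
rewrite /sqnorm !dotv_row2 // vi vj -[RHS]iso /=; ring.
Qed.

End ConformalKilling.

Lemma ord_exists_neq {n : nat} (i : 'I_n) : (1 < n)%N -> exists j : 'I_n, i != j.
Proof.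
move=> n_gt1; pose k0 : 'I_n := Ordinal (ltnW n_gt1).
have [->|ik0] := eqVneq i k0; last by exists k0.
by exists (Ordinal n_gt1).
Qed.

Theorem mainTheorem1 (R : realType) (d : nat) (Omega : set 'rV[R]_d)
  (phi : 'rV[R]_d -> 'rV[R]_d) :
  (3 <= d)%N ->
  bounded_lipschitz_domain Omega ->
  in_CK phi ->
  (forall x, bdry Omega x -> phi x = 0) ->
  forall x, Omega x -> phi x = 0.
Proof.
move=> d_ge3 [_ oO _ bO _] [a [b [lam [A [_ phiE]]]]] phi_bdry0 x Ox.
apply/rowP => i; rewrite mxE phiE.
have [j ij] := ord_exists_neq i (ltnW d_ge3).
have [v v0 quad0] := ck_quad_coef_isotropic b ij.
have [beta line] := ck_field_line a b lam A x v i.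
apply: (line_affine_bdry_eq0 (fun y => ck_field a b lam A y ord0 i) beta
          oO bO Ox v0).
- by move=> y /phi_bdry0; rewrite phiE => ->; rewrite mxE.
- by move=> t; rewrite line quad0 mul0r add0r.
Qed.
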